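(* Let $S_f=\{f_i\ge0: i=1,\ldots,m\}$ be an inequality set in $\mathbf{x}=(x_1,\ldots,x_n)$ and fix the variable order $x_1\prec\cdots\prec x_n$. Then the reduced minimal characterization set of $S_f$ is unique: the equality part $\widetilde{E}$ is uniquely determined by $S_f$, and any two minimal characterization sets of $\{g\ge0: g\in R_f\}$ are trivially equivalent.
   Context: An inequality set is a finite set $S=\{f_i\ge 0: i=1,\ldots,m\}$ with each $f_i$ a nonzero homogeneous linear polynomial in $\mathbf{x}$ with real coefficients; its solutions are the points of $\mathbb{R}^n$ satisfying all inequalities; a subset of $S$ is an inequality set whose polynomials form a subset of $\{f_1,\ldots,f_m\}$. The equality $f_k=0$ is an implied equality of $S$ if $f_k(\mathbf{x})=0$ for every solution of $S$. Inequalities $f_1\ge0,\ldots,f_k\ge0$ imply $f\ge0$ if every $\mathbf{x}$ satisfying the former satisfies $f(\mathbf{x})\ge0$; an inequality of a set is redundant if implied by the other inequalities of the set. Two inequality sets are equivalent if they have the same solution set. A subset $S'$ of $S$ is a minimal characterization set of $S$ if $S'$ is equivalent to $S$ and contains no redundant inequality. Two inequalities $f\ge0$, $g\ge 0$ are trivially equivalent if $f=c\,g$ for some real $c>0$; two inequality sets are trivially equivalent if they have the same number of inequalities and each inequality of either set is trivially equivalent to some inequality of the other. For a finite system $E$ of homogeneous linear equations of rank $\tilde n$, its Gauss–Jordan reduced form (reduced row echelon form) w.r.t. $x_1\prec\cdots\prec x_n$ is the unique equivalent system $\{x_{k_i}-U_i=0: i=1,\ldots,\tilde n\}$, $k_1<\cdots<k_{\tilde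 n}$, each $U_i$ a real linear combination of non-pivot variables. Construction: let $I$ be the set of indices $k$ with $f_k=0$ an implied equality of $S_f$, $E=\{f_k=0:k\in I\}$, and $\widetilde E=\{x_{k_i}-U_i=0\}$ its Gauss–Jordan reduced form; let $R_f$ be the set of nonzero polynomials obtained from $f_j$, $j\notin I$, by substituting $U_i$ for $x_{k_i}$ for all $i$. A reduced minimal characterization set of $S_f$ is $\widetilde{E}\cup S_{r'}$, where $S_{r'}$ is a minimal characterization set of the inequality set $\{g\ge 0: g\in R_f\}$. *)

From HB Require Import structures.
From mathcomp Require Import all_boot all_order all_algebra.
From mathcomp Require Import finmap.
Set Implicit Arguments. Unset Strict Implicit. Unset Printing Implicit Defensive.
Import Order.TTheory GRing.Theory Num.Theory.
Local Open Scope ring_scope.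
Local Open Scope fset_scope.

(* A homogeneous linear polynomial f = sum_j c_j x_j in x = (x_1..x_n) is
   represented by its coefficient row vector c : 'rV[R]_n.  Points of R^n are
   row vectors x : 'rV[R]_n. *)
Definition lin_eval (R : realFieldType) (n : nat) (f x : 'rV[R]_n) : R :=
  \sum_(j < n) f 0 j * x 0 j.

Definition ineq_set (R : realFieldType) (n : nat) (S : {fset 'rV[R]_n}) : Prop :=
  forall f, f \in S -> f != 0.

Definition is_solution (R : realFieldType) (n : nat) (S : {fset 'rV[R]_n})
  (x : 'rV[R]_n) : Prop :=
  forall f, f \in S -> 0 <= lin_eval f x.

Definition implied_eq (R : realFieldType) (n : nat) (S : {fset 'rV[R]_n})
  (f : 'rV[R]_n) : Prop :=
  forall x, is_solution S x -> lin_eval f x = 0.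

Definition implies (R : realFieldType) (n : nat) (S : {fset 'rV[R]_n})
  (g : 'rV[R]_n) : Prop :=
  forall x, is_solution S x -> 0 <= lin_eval g x.

Definition redundant (R : realFieldType) (n : nat) (S : {fset 'rV[R]_n})
  (f : 'rV[R]_n) : Prop :=
  implies (S `\ f) f.

Definition equiv_sets (R : realFieldType) (n : nat) (S T : {fset 'rV[R]_n}) : Prop :=
  forall x, is_solution S x <-> is_solution T x.

Definition min_char_set (R : realFieldType) (n : nat) (S S' : {fset 'rV[R]_n}) : Prop :=
  [/\ S' `<=` S, equiv_sets S' S & forall f, f \in S' -> ~ redundant S' f].

Definition triv_equiv_ineq (R : realFieldType) (n : nat) (f g : 'rV[R]_n) : Prop :=
  exists2 c : R, 0 < c & f = c *: g.

Definition triv_equiv_sets (R : realFieldType) (n : nat) (S T : {fset 'rV[R]_n}) : Prop :=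
  [/\ #|` S| = #|` T|,
      forall f, f \in S -> exists2 g, g \in T & triv_equiv_ineq f g
    & forall g, g \in T -> exists2 f, f \in S & triv_equiv_ineq g f].

(* A Gauss-Jordan reduced system is a list G of pairs (k_i, r_i) where r_i is the
   coefficient vector of the equation x_{k_i} - U_i = 0.
   is_GJ_form E G: G is the Gauss--Jordan reduced form (reduced row echelon form,
   w.r.t. x_1 < ... < x_n) of the homogeneous linear system {e = 0 : e in E}:
   - G is equivalent to E (same solution set);
   - pivots are strictly increasing, k_1 < ... < k_r;
   - row r_i has coefficient 1 at its pivot k_i, coefficient 0 at every other
     pivot, and coefficient 0 at every variable preceding x_{k_i}
     (so U_i is a combination of non-pivot variables x_j, j > k_i). *)
Definition is_GJ_form (R : realFieldType) (n : nat) (E : {fset 'rV[R]_n})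
  (G : seq ('I_n * 'rV[R]_n)) : Prop :=
  [/\ (forall x : 'rV[R]_n,
          (forall e, e \in E -> lin_eval e x = 0) <->
          (forall p, p \in G -> lin_eval p.2 x = 0)),
      sorted ltn [seq nat_of_ord p.1 | p <- G]
    & forall p, p \in G ->
        [/\ p.2 0 p.1 = 1,
            (forall j : 'I_n, (j < p.1)%N -> p.2 0 j = 0)
          & (forall q, q \in G -> q.1 != p.1 -> p.2 0 q.1 = 0)]].

(* U_i as a linear form, from the row r_i = x_{k_i} - U_i *)
Definition GJ_U (R : realFieldType) (n : nat) (p : 'I_n * 'rV[R]_n) : 'rV[R]_n :=
  \row_j (if j == p.1 then 0 else - p.2 0 j).

(* substitute U_i for x_{k_i}, for all i, in the linear form g *)
Definition GJ_subst (R : realFieldType) (n : nat) (G : seq ('I_n * 'rV[R]_n))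
  (g : 'rV[R]_n) : 'rV[R]_n :=
  (\row_j (if j \in [seq p.1 | p <- G] then 0 else g 0 j))
  + \sum_(p <- G) g 0 p.1 *: GJ_U p.

(* R_f : the nonzero forms obtained from the f_j with f_j = 0 not an implied
   equality (i.e. f_j not in E) by the substitution above *)
Definition Rf (R : realFieldType) (n : nat) (S E : {fset 'rV[R]_n})
  (G : seq ('I_n * 'rV[R]_n)) : {fset 'rV[R]_n} :=
  [fset GJ_subst G g | g in S `\` E] `\ 0.

(* Gauss-Jordan part: if a form h vanishes on all solutions of a reduced system G with
   rows r_q and pivots k_q, then h = sum_q h_(k_q) r_q; this follows by testing h on
   the solutions e_j - sum_q (r_q)_j e_(k_q).  Writing a row of a second reduced system
   with the same solutions in this way and reading it at its pivot shows that the two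
   systems have the same pivots, and then the same rows.

   Inequality part: since E consists exactly of the implied equalities, some solution
   of S_f is strictly positive on every other f_j.  It solves E, where the substitution
   does not change values, so it is strictly feasible for R_f.  For f in a minimal set
   S1, combining this point with a solution of S1 \ f violating f gives a point z with
   f(z) = 0 at which all other inequalities of S1 are strict.  Some g of another minimal
   set S2 vanishes at z (otherwise one could leave the hyperplane f = 0 from z inside
   the common solution set), and near z the half-space f >= 0 lies in g >= 0, so g is a
   positive multiple of f.  A minimal set has no two proportional inequalities, so this
   matching is a bijection. *)
From HB Require Import structures.
From mathcomp Require Import all_boot all_order all_algebra.
From mathcomp Require Import finmap.
From Stdlib Require Import Classical.
Set Implicit Arguments. Unset Strict Implicit. Unset Printing Implicit Defensive.
Import Order.TTheory GRing.Theory Num.Theory.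
Local Open Scope fset_scope.
Local Open Scope ring_scope.

Lemma uniq_map_inj_in (T T' : eqType) (f : T -> T') (s : seq T) :
  uniq (map f s) -> {in s &, injective f}.
Proof.
elim: s => //= a s IH /andP[fa us] x y.
rewrite !inE => /predU1P[->|xs] /predU1P[->|ys] // fxy.
- by move: fa; rewrite fxy map_f.
- by move: fa; rewrite -fxy map_f.
- exact: IH.
Qed.

Lemma uniq_leq_size_rel (T : eqType) (P : T -> T -> Prop) (s1 s2 : seq T) :
  uniq s1 -> uniq s2 ->
  (forall x, x \in s1 -> exists2 y, y \in s2 & P x y) ->
  (forall x1 x2 y, x1 \in s1 -> x2 \in s1 -> P x1 y -> P x2 y -> x1 = x2) ->
  (size s1 <= size s2)%N.
Proof.
elim: s1 s2 => [|a s1 IH] s2 //= /andP[a_s1 u1] u2 match_s inj_s.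
have [y y_s2 Pay] := match_s a (mem_head _ _).
have s2_gt0 : (0 < size s2)%N by case: (s2) y_s2.
rewrite -(prednK s2_gt0) ltnS -(size_rem y_s2); apply: IH (rem_uniq y u2) _ _ => // [x x_s1|].
  have [y' y'_s2 Pxy'] := match_s x (mem_behead (s := a :: s1) x_s1).
  exists y' => //; rewrite (mem_rem_uniq _ u2) inE /= y'_s2 andbT.
  apply: contraNneq a_s1 => y'y; rewrite -y'y in Pay.
  have -> : a = x by apply: (inj_s a x y'); rewrite ?mem_head // inE x_s1 orbT.
  exact: x_s1.
by move=> x1 x2 y' h1 h2; apply: inj_s; rewrite inE ?h1 ?h2 orbT.
Qed.

Section LinEval.
Variables (R : realFieldType) (n : nat).
Local Notation V := 'rV[R]_n.
Implicit Types (f g x : V).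

Fact lin_eval_is_linear f : linear_for *%R (lin_eval f).
Proof.
move=> a x y; rewrite /lin_eval mulr_sumr -big_split; apply: eq_bigr => j _.
by rewrite !mxE mulrDr mulrCA.
Qed.

HB.instance Definition _ f :=
  GRing.isLinear.Build R V R _ (lin_eval f) (lin_eval_is_linear f).

Lemma lin_evalC f x : lin_eval f x = lin_eval x f.
Proof. by apply: eq_bigr => j _; rewrite mulrC. Qed.

Lemma lin_evalZl a f x : lin_eval (a *: f) x = a * lin_eval f x.
Proof. by rewrite lin_evalC linearZ /= lin_evalC. Qed.

Lemma lin_evalBl f g x : lin_eval (f - g) x = lin_eval f x - lin_eval g x.
Proof. by rewrite lin_evalC linearB /= (lin_evalC f) (lin_evalC g). Qed.

Lemma lin_eval_suml (I : Type) (r : seq I) (F : I -> V) x :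
  lin_eval (\sum_(i <- r) F i) x = \sum_(i <- r) lin_eval (F i) x.
Proof. by rewrite lin_evalC linear_sum; apply: eq_bigr => i _; rewrite lin_evalC. Qed.

Lemma lin_eval_delta f j : lin_eval f (delta_mx 0 j) = f 0 j.
Proof.
rewrite /lin_eval (bigD1 j) //= big1 ?addr0 => [|i /negbTE ij].
  by rewrite mxE !eqxx mulr1.
by rewrite mxE ij andbF mulr0.
Qed.

Lemma lin_eval_inj f g : lin_eval f =1 lin_eval g -> f = g.
Proof. by move=> fg; apply/rowP => j; rewrite -!lin_eval_delta fg. Qed.

Lemma halfspace_subset_scale f g : f != 0 ->
    (forall v, 0 <= lin_eval f v -> 0 <= lin_eval g v) ->
  exists2 c, 0 <= c & g = c *: f.
Proof.
move=> f_neq0 fg.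
have [j fj_neq0] : exists j, f 0 j != 0.
  apply/existsP; apply: contraNT f_neq0; rewrite negb_exists => /forallP f0.
  by apply/eqP/rowP => j; rewrite mxE; apply/eqP/negPn.
pose w : V := (f 0 j)^-1 *: delta_mx 0 j.
have fw : lin_eval f w = 1 by rewrite linearZ /= lin_eval_delta mulVf.
exists (lin_eval g w); first by apply: fg; rewrite fw.
apply: lin_eval_inj => v; rewrite lin_evalZl.
(* g >= 0 on both sides of the hyperplane f = 0, so g vanishes on it *)
set u := v - lin_eval f v *: w.
have fu : lin_eval f u = 0 by rewrite linearB linearZ /= fw mulr1 subrr.
have gu_ge0 : 0 <= lin_eval g u by apply: fg; rewrite fu.
have gu_le0 : 0 <= lin_eval g (- u) by apply: fg; rewrite linearN /= fu oppr0.
have /eqP : lin_eval g u = 0.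
  by apply/eqP; rewrite eq_le gu_ge0 -oppr_ge0 -linearN gu_le0.
by rewrite linearB linearZ /= subr_eq0 => /eqP ->; rewrite mulrC.
Qed.

End LinEval.

Section GaussJordan.
Variables (R : realFieldType) (n : nat).
Local Notation V := 'rV[R]_n.
Local Notation row := ('I_n * V)%type.
Implicit Types (h x : V).

Definition pivots (G : seq row) : seq 'I_n := [seq p.1 | p <- G].

Definition gj_solution (G : seq row) (x : V) : Prop :=
  forall p, p \in G -> lin_eval p.2 x = 0.

Definition gj_reduced (G : seq row) : Prop :=
  forall p, p \in G ->
    [/\ p.2 0 p.1 = 1,
        (forall j : 'I_n, (j < p.1)%N -> p.2 0 j = 0)
      & (forall q, q \in G -> q.1 != p.1 -> p.2 0 q.1 = 0)].

Lemma sorted_pivots_uniq (G : seq row) :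
  sorted ltn [seq nat_of_ord p.1 | p <- G] -> uniq (pivots G).
Proof.
move=> /(sorted_uniq ltn_trans ltnn).
by rewrite (map_comp (@nat_of_ord n) fst) => /map_uniq.
Qed.

Section ReducedSystem.
Variable G : seq row.
Hypotheses (G_reduced : gj_reduced G) (G_uniq : uniq (pivots G)).

Lemma gj_row_at_pivot p j : p \in G -> j \in pivots G -> p.2 0 j = (j == p.1)%:R.
Proof.
move=> pG /mapP[q qG ->]; have [->|qp] := eqVneq q.1 p.1.
  by case: (G_reduced pG).
by case: (G_reduced pG) => _ _ ->.
Qed.

Lemma sum_pivot_pick (W : nmodType) (F : row -> W) p : p \in G ->
  \sum_(q <- G) F q *+ (q.1 == p.1) = F p.
Proof.
move=> pG; rewrite (bigD1_seq p) ?(map_uniq G_uniq) //= eqxx mulr1n.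
rewrite big_seq_cond big1 ?addr0 // => q /andP[qG qp].
suff /negbTE -> : q.1 != p.1 by rewrite mulr0n.
by apply: contra_neq qp; apply: (uniq_map_inj_in G_uniq).
Qed.

Lemma gj_kernel_solution j :
  gj_solution G (delta_mx 0 j - \sum_(q <- G) q.2 0 j *: delta_mx 0 q.1).
Proof.
move=> p pG; rewrite linearB linear_sum /= lin_eval_delta.
under eq_big_seq => q qG.
  rewrite linearZ /= lin_eval_delta (gj_row_at_pivot pG (map_f _ qG)) mulr_natr; over.
by rewrite (sum_pivot_pick (fun q => q.2 0 j)) ?subrr.
Qed.

Lemma gj_form_eq0 h : (forall p, p \in G -> h 0 p.1 = 0) ->
  (forall x, gj_solution G x -> lin_eval h x = 0) -> h = 0.
Proof.
move=> h_pivots h_sol; apply/rowP => j; rewrite mxE.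
rewrite -(h_sol _ (gj_kernel_solution j)) linearB linear_sum /= lin_eval_delta.
rewrite big_seq big1 ?subr0 // => q qG.
by rewrite linearZ /= lin_eval_delta h_pivots ?mulr0.
Qed.

Lemma gj_form_span h : (forall x, gj_solution G x -> lin_eval h x = 0) ->
  h = \sum_(q <- G) h 0 q.1 *: q.2.
Proof.
move=> h_sol; apply/eqP; rewrite -subr_eq0; apply/eqP/gj_form_eq0.
  move=> p pG; rewrite !mxE summxE.
  under eq_big_seq => q qG.
    rewrite mxE (gj_row_at_pivot qG (map_f _ pG)) eq_sym mulr_natr; over.
  by rewrite (sum_pivot_pick (fun q => h 0 q.1)) ?subrr.
move=> x x_sol; rewrite lin_evalBl lin_eval_suml h_sol // big_seq big1 ?subrr //.
by move=> q qG; rewrite lin_evalZl x_sol ?mulr0.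
Qed.

End ReducedSystem.

Section TwoReducedSystems.
Variables G1 G2 : seq row.
Hypotheses (G1_reduced : gj_reduced G1) (G2_reduced : gj_reduced G2).
Hypothesis G2_uniq : uniq (pivots G2).
Hypothesis sol21 : forall x, gj_solution G2 x -> gj_solution G1 x.

Lemma gj_pivots_subset : {subset pivots G1 <= pivots G2}.
Proof.
move=> _ /mapP[p pG1 ->]; apply: contraT => p_npiv.
have span := gj_form_span G2_reduced G2_uniq (fun x x_sol => sol21 x_sol pG1).
case: (G1_reduced pG1) => p_one p_before _.
(* each term of the span vanishes at k_p: p is zero before k_p, and q is zero before k_q *)
suff : p.2 0 p.1 = 0 by rewrite p_one => /eqP; rewrite oner_eq0.
rewrite {1}span summxE big_seq big1 // => q qG2; rewrite mxE.
case: (G2_reduced qG2) => _ q_before _.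
case: (ltngtP q.1 p.1) => [qp|pq|/val_inj qp].
- by rewrite p_before ?mul0r.
- by rewrite q_before ?mulr0.
- by move: p_npiv; rewrite -qp map_f.
Qed.

Lemma gj_rows_subset : {subset pivots G2 <= pivots G1} -> {subset G1 <= G2}.
Proof.
move=> piv21 p pG1.
have /mapP[q qG2 pq] := gj_pivots_subset (map_f fst pG1).
have span := gj_form_span G2_reduced G2_uniq (fun x x_sol => sol21 x_sol pG1).
have p2q2 : p.2 = q.2.
  rewrite span; under eq_big_seq => r rG2.
    rewrite (gj_row_at_pivot G1_reduced pG1 (piv21 _ (map_f _ rG2))) scaler_nat pq; over.
  exact: (sum_pivot_pick G2_uniq (fun r => r.2)).
by rewrite [p]surjective_pairing pq p2q2 -surjective_pairing.
Qed.

End TwoReducedSystems.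

Lemma gj_reduced_uniq (G1 G2 : seq row) : gj_reduced G1 -> gj_reduced G2 ->
  sorted ltn [seq nat_of_ord p.1 | p <- G1] ->
  sorted ltn [seq nat_of_ord p.1 | p <- G2] ->
  (forall x, gj_solution G1 x <-> gj_solution G2 x) -> G1 = G2.
Proof.
move=> red1 red2 sorted1 sorted2 sol12.
have [uniq1 uniq2] := (sorted_pivots_uniq sorted1, sorted_pivots_uniq sorted2).
have sol21 x := proj2 (sol12 x); have {}sol12 x := proj1 (sol12 x).
have piv12 := gj_pivots_subset red1 red2 uniq2 sol21.
have piv21 := gj_pivots_subset red2 red1 uniq1 sol12.
apply: (@irr_sorted_eq _ (relpre (fun p : row => nat_of_ord p.1) ltn)).
- by move=> ? ? ?; apply: ltn_trans.
- by move=> ?; apply: ltnn.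
- by rewrite -sorted_map.
- by rewrite -sorted_map.
move=> p; apply/idP/idP.
  exact: (gj_rows_subset red1 red2 uniq2 sol21 piv21).
exact: (gj_rows_subset red2 red1 uniq1 sol12 piv12).
Qed.

End GaussJordan.

Section Solutions.
Variables (R : realFieldType) (n : nat).
Local Notation V := 'rV[R]_n.
Implicit Types (S : {fset V}) (f g x y z v : V).

Lemma is_solution0 S : is_solution S 0.
Proof. by move=> f _; rewrite linear0. Qed.

Lemma is_solutionD S x y : is_solution S x -> is_solution S y -> is_solution S (x + y).
Proof. by move=> Sx Sy f fS; rewrite linearD addr_ge0 ?Sx ?Sy. Qed.

Lemma exists_strict_solution S (l : seq V) : {subset l <= S} ->
    (forall f, f \in l -> exists2 x, is_solution S x & 0 < lin_eval f x) ->
  exists2 x, is_solution S x & forall f, f \in l -> 0 < lin_eval f x.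
Proof.
elim: l => [|a l IH] lS strict_each; first by exists 0; [exact: is_solution0|].
have [x Sx l_x] : exists2 x, is_solution S x & forall f, f \in l -> 0 < lin_eval f x.
  by apply: IH => f fl; [apply: lS | apply: strict_each]; rewrite inE fl orbT.
have [y Sy a_y] := strict_each a (mem_head _ _).
exists (x + y); first exact: is_solutionD.
move=> f; rewrite inE linearD => /predU1P[->|fl].
  by rewrite ltr_wpDl // Sx // lS ?mem_head.
by rewrite ltr_wpDr ?l_x // Sy // lS // inE fl orbT.
Qed.

Lemma strict_step_bound (l : seq V) z v : (forall h, h \in l -> 0 < lin_eval h z) ->
  exists2 d, 0 < d & forall h, h \in l -> d * `|lin_eval h v| <= lin_eval h z.
Proof.
elim: l => [|a l IH] l_z; first by exists 1.
have [d d_gt0 l_d] := IH (fun h hl => l_z h (mem_behead (s := a :: l) hl)).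
have a_z := l_z a (mem_head _ _).
pose da := lin_eval a z / (`|lin_eval a v| + 1).
have da_gt0 : 0 < da by rewrite divr_gt0 // ltr_wpDl.
have da_bound : da * `|lin_eval a v| <= lin_eval a z.
  by rewrite /da mulrAC ler_pdivrMr ?ltr_wpDl // ler_pM2l // lerDl.
exists (Num.min d da) => [|h]; first by rewrite lt_min d_gt0.
have [min_le_d min_le_da] : Num.min d da <= d /\ Num.min d da <= da.
  by rewrite !ge_min !lexx orbT.
rewrite inE => /predU1P[->|hl].
  exact: le_trans (ler_wpM2r (normr_ge0 _) min_le_da) da_bound.
exact: le_trans (ler_wpM2r (normr_ge0 _) min_le_d) (l_d h hl).
Qed.

Lemma strict_solution_perturb S z v : (forall h, h \in S -> 0 < lin_eval h z) ->
  exists2 d, 0 < d & is_solution S (z + d *: v).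
Proof.
move=> S_z; have [d d_gt0 S_d] := strict_step_bound v S_z.
exists d => // h hS.
rewrite linearD linearZ /= -[lin_eval h v]opprK mulrN subr_ge0.
apply: le_trans _ (S_d h hS); apply: ler_wpM2l; first exact: ltW.
by rewrite -normrN ler_norm.
Qed.

Lemma is_solution_fsetD1 S f x : f \in S -> 0 <= lin_eval f x ->
  is_solution (S `\ f) x -> is_solution S x.
Proof.
move=> fS fx Sf_x h hS; have [->//|hf] := eqVneq h f.
by apply: Sf_x; rewrite in_fsetD1 hf.
Qed.

Lemma nonredundant_triv_inj S f1 f2 g : (forall f, f \in S -> ~ redundant S f) ->
  f1 \in S -> f2 \in S -> triv_equiv_ineq f1 g -> triv_equiv_ineq f2 g -> f1 = f2.
Proof.
move=> irr f1S f2S [c1 c1_gt0 f1E] [c2 c2_gt0 f2E].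
have [//|neq] := eqVneq f1 f2; exfalso.
apply: (irr _ f1S) => x Sx; rewrite f1E lin_evalZl pmulr_rge0 //.
have : 0 <= lin_eval f2 x by apply: Sx; rewrite in_fsetD1 f2S eq_sym neq.
by rewrite f2E lin_evalZl pmulr_rge0.
Qed.

End Solutions.

Section MinimalCharacterization.
Variables (R : realFieldType) (n : nat).
Local Notation V := 'rV[R]_n.
Variables (T : {fset V}) (xs : V).
Hypothesis xs_strict : forall g, g \in T -> 0 < lin_eval g xs.
Implicit Types (S : {fset V}) (f g : V).

Lemma strict_neq0 g : g \in T -> g != 0.
Proof. by move=> /xs_strict; apply: contraTneq => ->; rewrite lin_evalC linear0 ltxx. Qed.

Lemma min_char_facet_point S f : min_char_set T S -> f \in S ->
  exists2 z, lin_eval f z = 0 & forall h, h \in S `\ f -> 0 < lin_eval h z.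
Proof.
move=> [ST _ irr] fS.
have [y Sf_y fy_lt0] : exists2 y, is_solution (S `\ f) y & lin_eval f y < 0.
  apply: NNPP => no_y; apply: (irr f fS) => y Sf_y.
  by rewrite leNgt; apply/negP => fy; apply: no_y; exists y.
have f_xs := xs_strict (fsubsetP ST f fS).
(* the point where the segment from xs to y crosses f = 0, up to a positive factor *)
exists (lin_eval f xs *: y - lin_eval f y *: xs).
  by rewrite linearB !linearZ /= mulrC subrr.
move=> h /[dup] hSf /fsetD1P[_ /(fsubsetP ST)/xs_strict h_xs].
rewrite linearB !linearZ /= -mulNr ltr_wpDl ?mulr_gt0 ?oppr_gt0 //.
exact: mulr_ge0 (ltW f_xs) (Sf_y h hSf).
Qed.

Section TwoMinimalSets.
Variables (S1 S2 : {fset V}) (f z : V).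
Hypotheses (S1_min : min_char_set T S1) (S2_min : min_char_set T S2).
Hypotheses (fS1 : f \in S1) (fz : lin_eval f z = 0).
Hypothesis S1f_z : forall h, h \in S1 `\ f -> 0 < lin_eval h z.

Let sol12 x : is_solution S1 x -> is_solution S2 x.
Proof. by case: S1_min S2_min => _ eq1 _ [_ eq2 _] /eq1/eq2. Qed.

Let sol21 x : is_solution S2 x -> is_solution S1 x.
Proof. by case: S1_min S2_min => _ eq1 _ [_ eq2 _] /eq2/eq1. Qed.

Lemma min_char_facet_vanish : exists2 g, g \in S2 & lin_eval g z = 0.
Proof.
have S1_z : is_solution S1 z.
  by apply: is_solution_fsetD1 fS1 _ _; rewrite ?fz // => h /S1f_z/ltW.
apply: NNPP => no_g.
have S2_z g : g \in S2 -> 0 < lin_eval g z.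
  move=> gS2; rewrite lt_def sol12 // andbT.
  by apply/eqP => gz; apply: no_g; exists g.
have [d d_gt0 S2_d] := strict_solution_perturb (- xs) S2_z.
have f_xs : 0 < lin_eval f xs by case: S1_min => ST _ _; apply/xs_strict/(fsubsetP ST).
have := sol21 S2_d fS1.
by rewrite linearD /= fz add0r linearZ linearN /= mulrN oppr_ge0 pmulr_rle0 // leNgt f_xs.
Qed.

Lemma min_char_facet_cone g : g \in S2 -> lin_eval g z = 0 ->
  forall v, 0 <= lin_eval f v -> 0 <= lin_eval g v.
Proof.
move=> gS2 gz v fv.
have [d d_gt0 S1f_d] := strict_solution_perturb v S1f_z.
have S1_d : is_solution S1 (z + d *: v).
  apply: is_solution_fsetD1 fS1 _ S1f_d.
  by rewrite linearD /= fz add0r linearZ /= mulr_ge0 // ltW.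
have := sol12 S1_d gS2.
by rewrite linearD /= gz add0r linearZ pmulr_rge0.
Qed.

End TwoMinimalSets.

Lemma min_char_triv_match S1 S2 f : min_char_set T S1 -> min_char_set T S2 ->
  f \in S1 -> exists2 g, g \in S2 & triv_equiv_ineq f g.
Proof.
move=> S1_min S2_min fS1.
have [z fz S1f_z] := min_char_facet_point S1_min fS1.
have [g gS2 gz] := min_char_facet_vanish S1_min S2_min fS1 fz S1f_z.
have [S1T _ _] := S1_min; have [S2T _ _] := S2_min.
have f_neq0 := strict_neq0 (fsubsetP S1T f fS1).
have g_neq0 := strict_neq0 (fsubsetP S2T g gS2).
have [c c_ge0 gc] := halfspace_subset_scale f_neq0
  (min_char_facet_cone S1_min S2_min fS1 fz S1f_z gS2 gz).
have c_gt0 : 0 < c.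
  by rewrite lt_def c_ge0 andbT; apply: contraNneq g_neq0 => c0; rewrite gc c0 scale0r.
exists g => //; exists c^-1; first by rewrite invr_gt0.
by rewrite gc scalerA mulVf ?scale1r // gt_eqF.
Qed.

Lemma min_char_card_le S1 S2 : min_char_set T S1 -> min_char_set T S2 ->
  (#|` S1| <= #|` S2|)%N.
Proof.
move=> S1_min S2_min; have [_ _ irr1] := S1_min.
apply: (uniq_leq_size_rel (P := @triv_equiv_ineq R n)) (fset_uniq _) (fset_uniq _) _ _.
  by move=> f; apply: min_char_triv_match.
by move=> f1 f2 g; apply: nonredundant_triv_inj.
Qed.

Lemma min_char_triv_equiv S1 S2 : min_char_set T S1 -> min_char_set T S2 ->
  triv_equiv_sets S1 S2.
Proof.
move=> S1_min S2_min; split.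
- by apply/eqP; rewrite eqn_leq !min_char_card_le.
- by move=> f; apply: min_char_triv_match.
- by move=> g; apply: min_char_triv_match.
Qed.

End MinimalCharacterization.

Section Substitution.
Variables (R : realFieldType) (n : nat).
Local Notation V := 'rV[R]_n.
Variable G : seq ('I_n * V).
Hypotheses (G_reduced : gj_reduced G) (G_uniq : uniq (pivots G)).

Lemma GJ_U_reduced p : p \in G -> GJ_U p = delta_mx 0 p.1 - p.2.
Proof.
move=> pG; apply/rowP => j; rewrite !mxE eqxx /=.
have [->|_] := eqVneq j p.1; last by rewrite sub0r.
by case: (G_reduced pG) => ->; rewrite subrr.
Qed.

Lemma gj_subst_eval g x : gj_solution G x ->
  lin_eval (GJ_subst G g) x = lin_eval g x.
Proof.
move=> x_sol; rewrite /GJ_subst lin_evalC linearD linear_sum /=.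
under eq_big_seq => p pG.
  rewrite linearZ /= -lin_evalC GJ_U_reduced // lin_evalBl x_sol // subr0.
  rewrite lin_evalC lin_eval_delta; over.
rewrite -(big_map fst xpredT (fun j => g 0 j * x 0 j)) big_uniq //=.
rewrite /lin_eval [X in _ + X]big_mkcond -big_split /=; apply: eq_bigr => j _.
by rewrite mxE; case: (j \in _); rewrite ?mulr0 ?add0r ?addr0 // mulrC.
Qed.

End Substitution.

Lemma exists_strict_nonimplied (R : realFieldType) (n : nat) (S E : {fset 'rV[R]_n}) :
    (forall f, f \in E <-> f \in S /\ implied_eq S f) ->
  exists2 x, is_solution S x & forall f, f \in S `\` E -> 0 < lin_eval f x.
Proof.
move=> E_implied; apply: exists_strict_solution => [f|f].
  by rewrite in_fsetD => /andP[].
rewrite in_fsetD => /andP[fE fS]; apply: NNPP => no_x.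
move/negP: fE; apply; apply/E_implied; split=> // x Sx.
apply/eqP; rewrite eq_le (Sx f fS) andbT leNgt; apply/negP => fx.
by apply: no_x; exists x.
Qed.

Lemma Rf_strict_point (R : realFieldType) (n : nat) (S E : {fset 'rV[R]_n}) G :
    (forall f, f \in E <-> f \in S /\ implied_eq S f) -> is_GJ_form E G ->
  exists xs, forall g, g \in Rf S E G -> 0 < lin_eval g xs.
Proof.
move=> E_implied [E_G G_sorted G_reduced].
have [xs S_xs xs_strict] := exists_strict_nonimplied E_implied.
have xs_sol : gj_solution G xs by apply/E_G => e /E_implied[_ e_implied]; apply: e_implied.
exists xs => _ /fsetD1P[_ /imfsetP[f /= fSE ->]].
by rewrite gj_subst_eval ?sorted_pivots_uniq ?xs_strict.
Qed.

Theorem theorem6 (R : realFieldType) (n : nat) (S E : {fset 'rV[R]_n}) :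
  ineq_set S ->
  (forall f, f \in E <-> f \in S /\ implied_eq S f) ->
  forall G1 G2 : seq ('I_n * 'rV[R]_n),
    is_GJ_form E G1 -> is_GJ_form E G2 ->
  forall S1 S2 : {fset 'rV[R]_n},
    min_char_set (Rf S E G1) S1 -> min_char_set (Rf S E G2) S2 ->
  G1 = G2 /\ triv_equiv_sets S1 S2.
Proof.
move=> _ E_implied G1 G2 GJ1 GJ2 S1 S2 S1_min S2_min.
have G12 : G1 = G2.
  case: GJ1 GJ2 => [E_G1 sorted1 red1] [E_G2 sorted2 red2].
  by apply: gj_reduced_uniq => // x; split=> [/(E_G1 x)/(E_G2 x) | /(E_G2 x)/(E_G1 x)].
subst G2; split=> //.
have [xs xs_strict] := Rf_strict_point E_implied GJ1.
exact: (min_char_triv_equiv xs_strict S1_min S2_min).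
Qed.
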